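(* Let $N\ge\kappa\ge1$ be integers and let $\mathbf a_1,\dots,\mathbf a_N\in\mathbb R^{\kappa}$ be such that every collection of at most $\kappa$ of them is linearly independent. Let $\mathbf A$ be the block matrix $\mathbf A=[\mathbf A_{m,n}]_{m,n=1}^N\in\mathbb R^{N\kappa\times(N\kappa-\kappa(\kappa-1)/2)}$, where $\mathbf A_{m,n}\in\mathbb R^{\kappa\times\min\{\kappa,N-n+1\}}$ has $q$-th column ($1\le q\le\min\{\kappa,N-n+1\}$) $$\mathbf A_{m,n}(:,q)=\begin{cases}\mathbf a_{q+n-1}, & m=n,\\ \mathbf a_n, & m=q+n-1\ (\text{and } m\ne n),\\ \mathbf 0, & \text{otherwise}.\end{cases}$$ Then $\operatorname{rank}(\mathbf A)=N\kappa-\frac{\kappa(\kappa-1)}{2}$.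
   Context: $\mathbf A$ is the coefficient matrix of the linear system in the variables $B_{n,m}$, $n\le m\le \min\{n+\kappa-1,N\}$, obtained by writing $\mathbf B\mathbf M=\boldsymbol\Gamma$ row by row for a real symmetric band matrix $\mathbf B$ of band width $\kappa-1$, where $\mathbf M$ has rows $\mathbf a_n^T$; the column of $\mathbf A$ indexed by block $n$ and position $q$ corresponds to the variable $B_{n,n+q-1}$. *)

From HB Require Import structures.
From mathcomp Require Import all_boot all_order all_algebra.
From mathcomp Require Import reals.
Set Implicit Arguments. Unset Strict Implicit. Unset Printing Implicit Defensive.
Import Order.TTheory GRing.Theory Num.Theory.
Local Open Scope ring_scope.

(* 0-based indexing: blocks m, n in 'I_N (paper: m+1, n+1), positions
   q in 'I_kappa (paper: q+1).  A column of block n at position q exists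
   iff q < min(kappa, N - n), i.e. n + q < N. *)

Definition rowT (N kappa : nat) := ('I_N * 'I_kappa)%type.

Definition colT (N kappa : nat) :=
  {p : 'I_N * 'I_kappa | (p.2 + p.1 < N)%N}.

(* The index n + q (paper: q + n - 1) of a column, as an element of 'I_N. *)
Definition col_shift (N kappa : nat) (c : colT N kappa) : 'I_N :=
  Ordinal (valP c).

Definition Aentry (R : nzRingType) (N kappa : nat) (a : 'I_N -> 'rV[R]_kappa)
  (r : rowT N kappa) (c : colT N kappa) : R :=
  let m := r.1 in let i := r.2 in let n := (val c).1 in
  if m == n then a (col_shift c) 0 i
  else if m == col_shift c then a n 0 i
  else 0.

(* The matrix A (rows and columns enumerated via the finite index types;
   reordering rows/columns does not affect the rank). *)
Definition Amat (R : nzRingType) (N kappa : nat) (a : 'I_N -> 'rV[R]_kappa) :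
  'M[R]_(#|{: rowT N kappa}|, #|{: colT N kappa}|) :=
  \matrix_(r, c) Aentry a (enum_val r) (enum_val c).

Definition lin_indep (R : fieldType) (N kappa : nat) (a : 'I_N -> 'rV[R]_kappa)
  (S : {set 'I_N}) : bool :=
  row_free (\matrix_(k < #|S|) a (enum_val k)).

From HB Require Import structures.
From mathcomp Require Import all_boot all_order all_algebra.
From mathcomp Require Import reals zify.
Import Order.TTheory GRing.Theory Num.Theory.
Local Open Scope ring_scope.

(* The columns of A are linearly independent, which we show by induction on
   the block index m.  The rows of block m only see the columns of block m
   (through the vectors a_(m+q), q < min(kappa, N - m)) and the columns of
   earlier blocks n < m whose shifted index n + q equals m (through a_n).
   Once the coefficients of the earlier blocks are known to vanish, the rows
   of block m give a vanishing combination of at most kappa distinct vectors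
   a_(m+q), so the coefficients of block m vanish as well.  The number of
   columns is sum_(q < kappa) (N - q) = N kappa - kappa (kappa - 1) / 2. *)

Section ColumnCount.

Local Open Scope nat_scope.

Lemma card_colT (N kappa : nat) : kappa <= N ->
  #|{: colT N kappa}| = N * kappa - kappa * (kappa - 1) %/ 2.
Proof.
move=> kN; rewrite card_sig -sum1_card.
rewrite (eq_bigl (fun p : 'I_N * 'I_kappa =>
  (p.1 \in 'I_N) && (p.2 \in [pred q : 'I_kappa | q + p.1 < N]))) //.
rewrite -(pair_big_dep (fun n : 'I_N => n \in 'I_N) (fun n (q : 'I_kappa) => q + n < N)
  (fun _ _ => 1)) /= (exchange_big_dep predT) //=.
have column_length (q : 'I_kappa) : \sum_(n < N | q + n < N) 1 = N - q.
  rewrite (eq_bigl (fun n : 'I_N => n < N - q)); last by move=> n; lia.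
  by rewrite -[RHS]card_ord -sum1_card (big_ord_widen N (fun=> 1)) ?leq_subr.
rewrite (eq_bigr (fun q : 'I_kappa => N - q)) //.
have split : \sum_(q < kappa) (N - q) + \sum_(q < kappa) q = N * kappa.
  rewrite -big_split /= (eq_bigr (fun _ => N)); last by move=> q _; have := ltn_ord q; lia.
  by rewrite sum_nat_const card_ord mulnC.
have gauss : \sum_(q < kappa) q = kappa * (kappa - 1) %/ 2.
  by rewrite -(big_mkord xpredT (fun q => q)) bin2_sum bin2 divn2 subn1.
by rewrite -gauss -split addnK.
Qed.

End ColumnCount.

Section ColumnsIndependent.

Variables (R : fieldType) (N kappa : nat) (a : 'I_N -> 'rV[R]_kappa).

Lemma lin_indep_coef0 (S : {set 'I_N}) (y : 'I_N -> R) :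
  lin_indep a S -> \sum_(j in S) y j *: a j = 0 -> {in S, forall j, y j = 0}.
Proof.
move=> indepS sum0 j jS.
pose w := \row_(k < #|S|) y (enum_val k).
have : w *m \matrix_(k < #|S|) a (enum_val k) = 0.
  rewrite mulmx_sum_row -[RHS]sum0 (big_enum_val (fun j => y j *: a j)) /=.
  by apply: eq_bigr => k _; rewrite rowK mxE.
move/eqP; rewrite mulmx_free_eq0 // => /eqP/rowP/(_ (enum_rank_in jS j)).
by rewrite !mxE enum_rankK_in.
Qed.

Lemma lin_indep_coef0_in {I : finType} {B : {set I}} {f : I -> 'I_N} {x : I -> R} :
  {in B &, injective f} -> lin_indep a (f @: B) ->
  \sum_(i in B) x i *: a (f i) = 0 -> {in B, forall i, x i = 0}.
Proof.
move=> f_inj indep sum0 i iB.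
pose y j := \sum_(k in B | f k == j) x k.
have yf : {in B, forall k, y (f k) = x k}.
  move=> k kB; rewrite /y (big_pred1 k) // => l; rewrite andbC.
  apply/andP/eqP => [[/eqP efl lB]|->]; last by rewrite kB eqxx.
  exact: f_inj efl.
rewrite -yf //; apply: (@lin_indep_coef0 _ y indep) (imset_f f iB).
rewrite big_imset //= -[RHS]sum0; apply: eq_bigr => k kB.
by rewrite yf.
Qed.

Hypothesis a_indep : forall S : {set 'I_N}, (#|S| <= kappa)%N -> lin_indep a S.

Notation col := (colT N kappa).

Definition col_block (c : col) : 'I_N := (val c).1.

Definition block_cols (m : 'I_N) : {set col} := [set c | col_block c == m].

Lemma col_shift_inj_block m : {in block_cols m &, injective (@col_shift N kappa)}.
Proof.
move=> [[n1 q1] h1] [[n2 q2] h2]; rewrite !inE /col_block /= => /eqP e1 /eqP e2.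
move/(congr1 val) => /= eq; apply: val_inj => /=; rewrite e1 e2; congr pair.
by apply: val_inj => /=; move: eq; rewrite e1 e2; lia.
Qed.

Lemma card_block_shifts m : (#|(@col_shift N kappa) @: block_cols m| <= kappa)%N.
Proof.
apply: leq_trans (leq_imset_card _ _) _.
rewrite -(@card_in_imset _ _ (fun c : col => (val c).2)); last first.
  move=> c1 c2 c1m c2m eq2; apply: (col_shift_inj_block m _ _ c1m c2m); apply: val_inj.
  by move: c1m c2m; rewrite !inE /col_block /= => /eqP -> /eqP ->; rewrite eq2.
by rewrite -[X in (_ <= X)%N]card_ord max_card.
Qed.

Section Kernel.

Variable x : col -> R.
Hypothesis x_ker :
  forall (m : 'I_N) (i : 'I_kappa), \sum_(c : col) x c * Aentry a (m, i) c = 0.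

Lemma block_combination_eq0 (m : 'I_N) :
  (forall c, (col_block c < m)%N -> x c = 0) ->
  \sum_(c in block_cols m) x c *: a (col_shift c) = 0.
Proof.
move=> x_earlier; apply/rowP => i; rewrite summxE mxE -[RHS](x_ker m i).
rewrite [RHS](bigID (mem (block_cols m))) /= [X in _ = _ + X]big1 ?addr0.
  apply: eq_bigr => c; rewrite inE => /eqP mc.
  by rewrite mxE /Aentry /= -[(val c).1]/(col_block c) mc eqxx.
move=> c; rewrite inE /Aentry /= -[(val c).1]/(col_block c) eq_sym => cm.
rewrite (negbTE cm); case: (m =P col_shift c) => [mc|]; last by rewrite mulr0.
rewrite x_earlier ?mul0r //; move: cm; rewrite mc -(inj_eq val_inj) /col_block /=; lia.
Qed.

Lemma col_ker_eq0 c : x c = 0.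
Proof.
suff: forall n (c : col), col_block c = n :> nat -> x c = 0 by apply.
elim/ltn_ind => n IH {}c cn.
have c_block : c \in block_cols (col_block c) by rewrite inE.
apply: (lin_indep_coef0_in (col_shift_inj_block _) (a_indep _ (card_block_shifts _))
  _ c c_block).
by apply: block_combination_eq0 => d; rewrite cn => lt; exact: IH lt d erefl.
Qed.

End Kernel.

Lemma rank_Amat : \rank (Amat a) = #|{: col}|.
Proof.
rewrite -mxrank_tr; apply/eqP/inj_row_free => v vA0.
pose x (c : col) := v 0 (enum_rank c).
have x_ker (m : 'I_N) (i : 'I_kappa) : \sum_(c : col) x c * Aentry a (m, i) c = 0.
  move/rowP/(_ (enum_rank ((m, i) : rowT N kappa))): vA0.
  rewrite !mxE => row_eq0; rewrite -[RHS]row_eq0.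
  rewrite (reindex (@enum_rank _)) /=; last exact: onW_bij (@enum_rank_bij _).
  by apply: eq_bigr => c _; rewrite !mxE !enum_rankK.
apply/rowP => k; rewrite !mxE.
by have := col_ker_eq0 _ x_ker (enum_val k); rewrite /x enum_valK.
Qed.

End ColumnsIndependent.

Theorem lemma2 (R : realType) (N kappa : nat) (a : 'I_N -> 'rV[R]_kappa) :
  (1 <= kappa)%N -> (kappa <= N)%N ->
  (forall S : {set 'I_N}, (#|S| <= kappa)%N -> lin_indep a S) ->
  \rank (Amat a) = (N * kappa - kappa * (kappa - 1) %/ 2)%N.
Proof. by move=> _ kN a_indep; rewrite rank_Amat // card_colT. Qed.
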